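(* Let $E$ be an order complete vector lattice and let $T:E\to S(X)$ be Wickstead's representation of $E$, namely: $(B_\alpha)_{\alpha}$ is a family of pairwise disjoint bands of $E$, each with a weak unit $x_\alpha$, such that every $x\in E$ is written as $x=\bigvee_\alpha y_\alpha$ with $y_\alpha\in B_\alpha$; $X_\alpha$ are compact Hausdorff spaces and $T_\alpha:B_\alpha\to S(X_\alpha)$ injective lattice homomorphisms with $T_\alpha(x_\alpha)=\mathbf{1}_{X_\alpha}$ and the supremum-norm closure of $T_\alpha$ of the ideal generated by $x_\alpha$ in $B_\alpha$ equal to $C(X_\alpha)$; $X=\bigsqcup_\alpha X_\alpha$; and $T(x)=(T_\alpha(y_\alpha))_\alpha$ under the identification $S(X)=\prod_\alpha S(X_\alpha)$. Then $T(E)$ is an ideal of $S(X)$ (so $E$ can be considered as an ideal of $S(X)$).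
   Context: For a topological space $X$, $S(X)$ is the Archimedean vector lattice of equivalence classes of continuous real-valued functions defined on open dense subsets of $X$ (two functions identified if they agree on the intersection of their domains), with pointwise operations; $\mathbf{1}_X$ is the constant function $1$. For a disjoint union $X=\bigsqcup_\alpha X_\alpha$, $S(X)$ is identified with $\prod_\alpha S(X_\alpha)$ with the componentwise order. *)

From HB Require Import structures.
From mathcomp Require Import all_boot all_order all_algebra.
From mathcomp Require Import all_classical all_reals all_analysis.
Set Implicit Arguments. Unset Strict Implicit. Unset Printing Implicit Defensive.
Import Order.TTheory GRing.Theory Num.Theory.
Import numFieldNormedType.Exports.
Local Open Scope classical_set_scope.
Local Open Scope ring_scope.

Section VectorLattice.
Variables (R : realType) (E : lmodType R) (le : E -> E -> Prop).

Definition is_ub (A : set E) (u : E) := forall a, A a -> le a u.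
Definition is_sup (A : set E) (s : E) :=
  is_ub A s /\ forall u, is_ub A u -> le s u.

Record vector_lattice : Prop := {
  vl_refl : forall x, le x x;
  vl_antisym : forall x y, le x y -> le y x -> x = y;
  vl_trans : forall x y z, le x y -> le y z -> le x z;
  vl_add : forall x y z, le x y -> le (x + z) (y + z);
  vl_scale : forall (c : R) x y, 0 <= c -> le x y -> le (c *: x) (c *: y);
  vl_join : forall x y, exists s, is_sup [set x; y] s }.

Definition order_complete :=
  forall A : set E, A !=set0 -> (exists u, is_ub A u) -> exists s, is_sup A s.

Definition vjoin (x y : E) : E := xget 0 [set s | is_sup [set x; y] s].
Definition vmeet (x y : E) : E := - vjoin (- x) (- y).
Definition vabs (x : E) : E := vjoin x (- x).
Definition vdisj (x y : E) : Prop := vmeet (vabs x) (vabs y) = 0.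

Definition is_ideal (A : set E) : Prop :=
  A 0 /\ (forall x y, A x -> A y -> A (x + y)) /\
  (forall (c : R) x, A x -> A (c *: x)) /\
  (forall x y, A y -> le (vabs x) (vabs y) -> A x).

Definition is_band (B : set E) : Prop :=
  is_ideal B /\ forall (D : set E) s, D `<=` B -> is_sup D s -> B s.

Definition weak_unit (B : set E) (e : E) : Prop :=
  B e /\ le 0 e /\ forall y, B y -> vmeet (vabs y) e = 0 -> y = 0.

Definition gen_ideal (B : set E) (e : E) : set E :=
  [set z | B z /\ exists c : R, le (vabs z) (c *: e)].

End VectorLattice.

(* S(X): representatives are pairs (D, f) with D open dense and f      *)
(* continuous on D; classes are taken modulo agreement on the          *)
(* intersection of the domains.                                        *)
Record Sfun (R : realType) (X : topologicalType) := MkSfun {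
  sdom : set X; sfn : X -> R }.

Section SX.
Variables (R : realType) (X : topologicalType).
Implicit Types s t : Sfun R X.

Definition is_S s : Prop :=
  open (sdom s) /\ dense (sdom s) /\ {within sdom s, continuous (sfn s)}.

Definition Seq s t : Prop :=
  forall x, sdom s x -> sdom t x -> sfn s x = sfn t x.
Definition Sle s t : Prop :=
  forall x, sdom s x -> sdom t x -> sfn s x <= sfn t x.

Definition Sadd s t : Sfun R X :=
  MkSfun (sdom s `&` sdom t) (fun x => sfn s x + sfn t x).
Definition Sscale (c : R) s : Sfun R X := MkSfun (sdom s) (fun x => c * sfn s x).
Definition Sjoin s t : Sfun R X :=
  MkSfun (sdom s `&` sdom t) (fun x => Num.max (sfn s x) (sfn t x)).
Definition Sabs s : Sfun R X := MkSfun (sdom s) (fun x => `|sfn s x|).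
Definition Sone : Sfun R X := MkSfun setT (fun _ => 1).

Definition in_sup_closure (A : set (Sfun R X)) s : Prop :=
  forall eps : R, 0 < eps -> exists a, A a /\
    forall x, sdom s x -> sdom a x -> `|sfn s x - sfn a x| <= eps.

Definition in_CX s : Prop :=
  exists f : X -> R, continuous f /\ Seq s (MkSfun setT f).
End SX.

Definition injective_lattice_hom (R : realType) (E : lmodType R)
  (le : E -> E -> Prop) (B : set E) (X : topologicalType)
  (T : E -> Sfun R X) : Prop :=
  (forall y, B y -> is_S (T y)) /\
  (forall y z, B y -> B z -> Seq (T (y + z)) (Sadd (T y) (T z))) /\
  (forall (c : R) y, B y -> Seq (T (c *: y)) (Sscale c (T y))) /\
  (forall y z, B y -> B z -> Seq (T (vjoin le y z)) (Sjoin (T y) (T z))) /\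
  (forall y z, B y -> B z -> Seq (T y) (T z) -> y = z).

From Pilot Require Import Defs.
From mathcomp Require Import all_boot all_order all_algebra.
From mathcomp Require Import all_classical all_reals all_analysis.
From mathcomp Require Import lra.
Import Order.TTheory GRing.Theory Num.Theory.
Import numFieldNormedType.Exports.
Local Open Scope classical_set_scope.
Local Open Scope ring_scope.

(* Addition and scaling pass from E to S(X) through the band projections.  For
   solidity, let |s| <= |T x| in S(X) and fix a band B_a, with u = P_a |x|.  By order
   completeness the set of w in B_a with -u <= w <= u and T_a w <= s has a supremum
   z_a, and T_a z_a = s_a: if T_a z_a and s_a differed near some point, a small
   positive element of B_a concentrated there -- T_a of the ideal generated by the
   weak unit approximates a Urysohn function -- could be subtracted from, resp. added
   to, z_a, contradicting that z_a is the supremum.  Since |z_a| <= |x| for all a,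
   order completeness glues the positive and the negative parts of the z_a into one
   y in E with P_a y = z_a. *)

Set Implicit Arguments.
Unset Strict Implicit.

Section Topology.
Variables (R : realType) (X : topologicalType).

Lemma open_nbhs_subr_gt (f g : X -> R) (D : set X) q (c : R) : open D -> D q ->
  f @ q --> f q -> g @ q --> g q -> c < f q - g q ->
  exists V : set X, [/\ open V, V q, V `<=` D & forall r, V r -> c < f r - g r].
Proof.
move=> oD Dq fq gq cq.
have : \forall r \near q, D r /\ c < (f - g) r.
  apply/near_andP; split; first exact: open_nbhs_nbhs.
  exact: (cvgr_gt (f q - g q) (cvgB fq gq)).
rewrite /prop_near1 nbhsE => -[V [oV Vq] VD].
by exists V; split => // r /VD [].
Qed.

Lemma continuous_le_dense (f g : X -> R) (U D : set X) : open U -> dense D ->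
  (forall q, U q -> f @ q --> f q) -> (forall q, U q -> g @ q --> g q) ->
  (forall q, U q -> D q -> f q <= g q) -> forall q, U q -> f q <= g q.
Proof.
move=> oU dD fc gc fg q Uq; rewrite leNgt -subr_gt0; apply/negP => gf.
have [V [oV Vq VU fgV]] := open_nbhs_subr_gt oU Uq (fc q Uq) (gc q Uq) gf.
have [r [Vr Dr]] := dD V (ex_intro _ q Vq) oV.
by have := fgV r Vr; rewrite subr_gt0 ltNge (fg r (VU r Vr) Dr).
Qed.

Lemma continuous_eq_dense (f g : X -> R) (U D : set X) : open U -> dense D ->
  (forall q, U q -> f @ q --> f q) -> (forall q, U q -> g @ q --> g q) ->
  (forall q, U q -> D q -> f q = g q) -> forall q, U q -> f q = g q.
Proof.
move=> oU dD fc gc fg q Uq; apply/eqP; rewrite eq_le.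
by rewrite !(continuous_le_dense oU dD) // => r Ur Dr; rewrite fg.
Qed.

Lemma is_S_continuous (s : Sfun R X) q : is_S s -> sdom s q -> sfn s @ q --> sfn s q.
Proof.
move=> [os [_]]; rewrite continuous_open_subspace // => sc sq.
by apply: sc; rewrite in_setE.
Qed.

Lemma is_S_le_dense (s t : Sfun R X) (D : set X) : is_S s -> is_S t -> dense D ->
  (forall q, sdom s q -> sdom t q -> D q -> sfn s q <= sfn t q) -> Sle s t.
Proof.
move=> Ss St dD st q sq tq.
have oU : open (sdom s `&` sdom t) by apply: openI; [case: Ss|case: St].
apply: (continuous_le_dense oU dD _ _ _ (conj sq tq)) => [r [rs _]|r [_ rt]|r [rs rt]].
- exact: is_S_continuous.
- exact: is_S_continuous.
- exact: st.
Qed.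

Lemma urysohn_point (V : set X) q : compact [set: X] -> hausdorff_space X ->
  open V -> V q -> exists phi : X -> R, [/\ continuous phi,
    forall r, 0 <= phi r <= 1, forall r, ~ V r -> phi r = 0 & phi q = 1].
Proof.
move=> cX hX oV Vq.
have cq : closed [set q] := @accessible_closed_set1 X (hausdorff_accessible hX) q.
have dis : ~` V `&` [set q] = set0.
  by apply/seteqP; split => // r [nVr /= rq]; apply: nVr; rewrite rq.
have sep := normal_separatorP.1 (compact_normal hX cX) _ _ (open_closedC oV) cq dis.
have [phi [phic phi01 phiV phiq]] := (@uniform_separatorP X R _ _).1 (sep R).
exists phi; split => // [r|r nVr|].
- by have := phi01 (phi r) (imageT _ _); rewrite /= in_itv.
- by apply: phiV; exists r.
- by apply: phiq; exists q.
Qed.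

Lemma is_S_gap_nbhs (s t : Sfun R X) q : is_S s -> is_S t -> sdom s q -> sdom t q ->
  sfn t q < sfn s q -> exists eps (V : set X), [/\ 0 < eps, open V, V q &
    forall r, V r -> [/\ sdom s r, sdom t r & eps < sfn s r - sfn t r]].
Proof.
move=> Ss St sq tq ts; exists ((sfn s q - sfn t q) / 2).
have oU : open (sdom s `&` sdom t) by apply: openI; [case: Ss|case: St].
have [|V [oV Vq VU gapV]] := open_nbhs_subr_gt oU (conj sq tq)
  (is_S_continuous Ss sq) (is_S_continuous St tq) (c := (sfn s q - sfn t q) / 2).
  by rewrite -subr_gt0; lra.
exists V; split => //; first by lra.
by move=> r Vr; have [] := VU r Vr; split => //; apply: gapV.
Qed.

End Topology.

Section VectorLatticeTheory.
Variables (R : realType) (E : lmodType R) (le : E -> E -> Prop).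
Hypothesis VL : vector_lattice le.

Local Notation vjoin := (vjoin le).
Local Notation vmeet := (vmeet le).
Local Notation vabs := (vabs le).
Local Notation vdisj := (vdisj le).

Definition vpos (x : E) : E := vjoin x 0.
Definition vneg (x : E) : E := vjoin (- x) 0.

Lemma vle_refl x : le x x. Proof. exact: vl_refl VL x. Qed.
Lemma vle_trans y x z : le x y -> le y z -> le x z. Proof. exact: vl_trans. Qed.
Lemma vle_anti x y : le x y -> le y x -> x = y. Proof. exact: vl_antisym. Qed.
Lemma vlerZ (c : R) x y : 0 <= c -> le x y -> le (c *: x) (c *: y).
Proof. exact: vl_scale. Qed.

Lemma vlerD2r z x y : le (x + z) (y + z) <-> le x y.
Proof.
split; last exact: vl_add.
by move=> /(vl_add VL (- z)); rewrite !addrK.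
Qed.

Lemma vlerD2l z x y : le (z + x) (z + y) <-> le x y.
Proof. by rewrite ![z + _]addrC vlerD2r. Qed.

Lemma vlerD a b c d : le a b -> le c d -> le (a + c) (b + d).
Proof. by move=> ab cd; apply: (@vle_trans (b + c)); [apply/vlerD2r|apply/vlerD2l]. Qed.

Lemma vsubr_ge0 x y : le 0 (y - x) <-> le x y.
Proof. by rewrite -(vlerD2r x) add0r subrK. Qed.

Lemma vlerN2 x y : le (- x) (- y) <-> le y x.
Proof. by rewrite -vsubr_ge0 opprK addrC vsubr_ge0. Qed.

Lemma vler_addr x p : le 0 p -> le x (x + p).
Proof. by rewrite -(vlerD2l x) addr0. Qed.

Lemma vge0_leN x : le 0 x -> le (- x) x.
Proof. by move=> x0; apply: (vle_trans (y:=0)) => //; rewrite -vsubr_ge0 sub0r opprK. Qed.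

Lemma vjoinP x y : is_sup le [set x; y] (vjoin x y).
Proof. exact: (xgetPex 0 (vl_join VL x y)). Qed.

Lemma vjoin_ubl x y : le x (vjoin x y). Proof. by apply: (vjoinP x y).1; left. Qed.
Lemma vjoin_ubr x y : le y (vjoin x y). Proof. by apply: (vjoinP x y).1; right. Qed.
Lemma vjoin_lub x y u : le x u -> le y u -> le (vjoin x y) u.
Proof. by move=> xu yu; apply: (vjoinP x y).2 => a [->|->]. Qed.

Lemma vjoin_idPr x y : le x y -> vjoin x y = y.
Proof.
by move=> xy; apply: vle_anti; [apply: vjoin_lub (vle_refl _)|apply: vjoin_ubr].
Qed.
Lemma vjoin_idPl x y : le y x -> vjoin x y = x.
Proof.
by move=> yx; apply: vle_anti; [apply: vjoin_lub (vle_refl _) _|apply: vjoin_ubl].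
Qed.

Lemma vjoinC x y : vjoin x y = vjoin y x.
Proof.
by apply: vle_anti; apply: vjoin_lub; first [exact: vjoin_ubl|exact: vjoin_ubr].
Qed.

Lemma vjoin_lel r x y : le x y -> le (vjoin x r) (vjoin y r).
Proof.
by move=> xy; apply: vjoin_lub (vjoin_ubr _ _); apply: vle_trans xy (vjoin_ubl _ _).
Qed.

Lemma vjoinDr z x y : vjoin (x + z) (y + z) = vjoin x y + z.
Proof.
apply: vle_anti.
  by apply: vjoin_lub; apply/vlerD2r; first [exact: vjoin_ubl|exact: vjoin_ubr].
rewrite -[vjoin (x + z) _](subrK z) vlerD2r.
apply: vjoin_lub; apply/(vlerD2r z); rewrite subrK.
  exact: vjoin_ubl.
exact: vjoin_ubr.
Qed.

Lemma vjoinZ (c : R) x y : 0 < c -> vjoin (c *: x) (c *: y) = c *: vjoin x y.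
Proof.
move=> c0; have c0' : 0 <= c by exact: ltW.
have ci : 0 <= c^-1 by rewrite invr_ge0.
have ZK v : c *: (c^-1 *: v) = v by rewrite scalerA mulfV ?gt_eqF // scale1r.
have KZ v : c^-1 *: (c *: v) = v by rewrite scalerA mulVf ?gt_eqF // scale1r.
apply: vle_anti.
  by apply: vjoin_lub; apply: vlerZ => //; [apply: vjoin_ubl|apply: vjoin_ubr].
rewrite -[X in le _ X]ZK; apply: vlerZ => //.
by apply: vjoin_lub; rewrite -[X in le X _]KZ; apply: vlerZ => //;
  [apply: vjoin_ubl|apply: vjoin_ubr].
Qed.

Lemma vmeet_lbl x y : le (vmeet x y) x.
Proof. by rewrite -vlerN2 opprK; apply: vjoin_ubl. Qed.
Lemma vmeet_lbr x y : le (vmeet x y) y.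
Proof. by rewrite -vlerN2 opprK; apply: vjoin_ubr. Qed.
Lemma vmeet_glb x y u : le u x -> le u y -> le u (vmeet x y).
Proof. by move=> ux uy; rewrite -vlerN2 opprK; apply: vjoin_lub; apply/vlerN2. Qed.

Lemma vmeet_idPl x y : le x y -> vmeet x y = x.
Proof.
by move=> xy; apply: vle_anti; [apply: vmeet_lbl|apply: vmeet_glb (vle_refl _) xy].
Qed.
Lemma vmeet_lel r x y : le x y -> le (vmeet x r) (vmeet y r).
Proof.
by move=> xy; apply: vmeet_glb (vmeet_lbr _ _); apply: vle_trans (vmeet_lbl _ _) xy.
Qed.
Lemma vmeet_ge0 x y : le 0 x -> le 0 y -> le 0 (vmeet x y).
Proof. exact: vmeet_glb. Qed.

Lemma vjoin_add_vmeet x y : vjoin x y + vmeet x y = x + y.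
Proof.
have -> : vjoin x y = vjoin (- y) (- x) + (x + y).
  by rewrite -vjoinDr addKr addrCA addNr addr0.
by rewrite vjoinC addrAC subrr add0r.
Qed.

Lemma vmeetZ (c : R) x y : 0 < c -> vmeet (c *: x) (c *: y) = c *: vmeet x y.
Proof. by move=> c0; rewrite /Defs.vmeet -!scalerN vjoinZ // scalerN. Qed.

Lemma vpos_sub_vneg x : vpos x - vneg x = x.
Proof. by have := vjoin_add_vmeet x 0; rewrite addr0 /Defs.vmeet oppr0. Qed.

Lemma vpos_ge0 x : le 0 (vpos x). Proof. exact: vjoin_ubr. Qed.
Lemma vneg_ge0 x : le 0 (vneg x). Proof. exact: vjoin_ubr. Qed.

Lemma vabs_ge x : le x (vabs x). Proof. exact: vjoin_ubl. Qed.
Lemma vabs_geN x : le (- x) (vabs x). Proof. exact: vjoin_ubr. Qed.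
Lemma vabs_lub x u : le x u -> le (- x) u -> le (vabs x) u.
Proof. exact: vjoin_lub. Qed.

Lemma vabs_ge0 x : le 0 (vabs x).
Proof.
have h2 : le 0 (2%:R *: vabs x).
  rewrite scaler_nat mulr2n -(subrr x).
  by apply: vlerD; [apply: vabs_ge|apply: vabs_geN].
have := vlerZ (c := 2^-1) (ltW _) h2.
by rewrite scaler0 scalerA mulVf ?pnatr_eq0 // scale1r; apply; rewrite invr_gt0 ltr0n.
Qed.

Lemma ger0_vabs x : le 0 x -> vabs x = x.
Proof. by move=> x0; apply: vjoin_idPl; apply: vge0_leN. Qed.
Lemma vabsN x : vabs (- x) = vabs x.
Proof. by rewrite /Defs.vabs opprK vjoinC. Qed.
Lemma vabs0 : vabs 0 = 0. Proof. exact/ger0_vabs/vle_refl. Qed.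
Lemma vabs_eq0 x : vabs x = 0 -> x = 0.
Proof.
move=> x0; apply: vle_anti; first by rewrite -x0; apply: vabs_ge.
by rewrite -vlerN2 oppr0 -x0; apply: vabs_geN.
Qed.
Lemma vpos_vneg_le_vabs x : le (vpos x) (vabs x) /\ le (vneg x) (vabs x).
Proof.
by split; apply: vjoin_lub; first [exact: vabs_ge|exact: vabs_geN|exact: vabs_ge0].
Qed.

Lemma vler_abs_add x y : le (vabs (x + y)) (vabs x + vabs y).
Proof.
apply: vabs_lub; first by apply: vlerD; apply: vabs_ge.
by rewrite opprD; apply: vlerD; apply: vabs_geN.
Qed.

Lemma vabsZ (c : R) x : vabs (c *: x) = `|c| *: vabs x.
Proof.
have absZ_pos d v : 0 < d -> vabs (d *: v) = d *: vabs v.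
  by move=> d0; rewrite /Defs.vabs -scalerN vjoinZ.
case: (ltgtP c 0) => [c0|c0|->].
- rewrite -[c *: x]opprK -scaleNr -scalerN absZ_pos ?oppr_gt0 //.
  by rewrite vabsN ltr0_norm.
- by rewrite absZ_pos // gtr0_norm.
- by rewrite normr0 !scale0r vabs0.
Qed.

Lemma vmeet_addl_le p q r : le 0 p -> le 0 q -> le 0 r ->
  le (vmeet (p + q) r) (vmeet p r + vmeet q r).
Proof.
move=> p0 q0 r0; set w := vmeet (p + q) r.
rewrite -(vlerD2r (- vmeet p r)) [X in le _ X]addrAC subrr add0r.
apply: vmeet_glb.
  have -> : w - vmeet p r = vjoin (- p + w) (- r + w).
    by rewrite vjoinDr /Defs.vmeet opprK addrC.
  apply: vjoin_lub; first by rewrite -(vlerD2l p) addNKr; apply: vmeet_lbl.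
  apply: (vle_trans (y:=0)) => //.
  by rewrite addrC -(vlerD2r r) subrK add0r; apply: vmeet_lbr.
apply: vle_trans (vmeet_lbr (p + q) r); rewrite -[X in le _ X]addr0 vlerD2l.
by rewrite -vlerN2 opprK oppr0; apply: vmeet_ge0.
Qed.

Lemma vdisj0 y : vdisj 0 y.
Proof. by rewrite /Defs.vdisj vabs0 vmeet_idPl //; apply: vabs_ge0. Qed.

Lemma vdisjD x1 x2 y : vdisj x1 y -> vdisj x2 y -> vdisj (x1 + x2) y.
Proof.
rewrite /Defs.vdisj => d1 d2.
apply: vle_anti; last by apply: vmeet_ge0; apply: vabs_ge0.
apply: vle_trans (vmeet_lel _ (vler_abs_add x1 x2)) _.
by rewrite -[0]addr0 -{1}d1 -d2; apply: vmeet_addl_le; apply: vabs_ge0.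
Qed.

Lemma vdisjZ (c : R) x y : c != 0 -> vdisj x (c^-1 *: y) -> vdisj (c *: x) y.
Proof.
rewrite /Defs.vdisj => c0 dxy; have c_gt0 : 0 < `|c| by rewrite normr_gt0.
have -> : vabs y = `|c| *: vabs (c^-1 *: y).
  by rewrite vabsZ scalerA normfV mulfV ?gt_eqF // scale1r.
by rewrite vabsZ vmeetZ // dxy scaler0.
Qed.

Lemma vdisjxx x : vdisj x x -> x = 0.
Proof. by rewrite /Defs.vdisj (vmeet_idPl (vle_refl _)); apply: vabs_eq0. Qed.

(* Disjointness gives [w + r = vjoin w r <= vjoin s r] for [w] in [A], so
   [s + r <= vjoin s r]. *)
Lemma is_sup_vmeet_eq0 (A : set E) s r : A !=set0 -> is_sup le A s -> le 0 r ->
  (forall w, A w -> le 0 w /\ vmeet w r = 0) -> vmeet s r = 0.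
Proof.
move=> [w0 Aw0] [s_ub s_lub] r0 hA.
have s0 : le 0 s by apply: vle_trans (hA _ Aw0).1 (s_ub _ Aw0).
apply: vle_anti; last exact: vmeet_ge0.
have s_le : le s (vjoin s r - r).
  apply: s_lub => w Aw; have [_ wr] := hA w Aw.
  have -> : w = vjoin w r - r by rewrite -[vjoin w r]addr0 -wr vjoin_add_vmeet addrK.
  by apply/vlerD2r/vjoin_lel/s_ub.
rewrite -(vlerD2l (vjoin s r)) addr0 vjoin_add_vmeet.
by rewrite -(vlerD2r (- r)) addrK.
Qed.

Definition is_band_projection (B : set E) (P : E -> E) : Prop :=
  forall x, B (P x) /\ forall b, B b -> vdisj (x - P x) b.

Section Band.
Variable B : set E.
Hypothesis hB : is_band le B.

Lemma band0 : B 0. Proof. by case: hB => -[]. Qed.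
Lemma bandD x y : B x -> B y -> B (x + y). Proof. by case: hB => -[_ [+ _] _]; apply. Qed.
Lemma bandZ (c : R) x : B x -> B (c *: x).
Proof. by case: hB => -[_ [_ [+ _]] _]; apply. Qed.
Lemma bandN x : B x -> B (- x). Proof. by rewrite -scaleN1r; apply: bandZ. Qed.
Lemma bandB x y : B x -> B y -> B (x - y). Proof. by move=> Bx /bandN; apply: bandD. Qed.
Lemma band_sup D s : D `<=` B -> is_sup le D s -> B s.
Proof. by case: hB => _; apply. Qed.
Lemma band_vjoin x y : B x -> B y -> B (vjoin x y).
Proof. by move=> Bx By; apply: band_sup (vjoinP x y) => z [->|->]. Qed.
Lemma band_vmeet x y : B x -> B y -> B (vmeet x y).
Proof. by move=> Bx By; apply/bandN/band_vjoin; apply: bandN. Qed.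

Section Projection.
Variable P : E -> E.
Hypothesis hP : is_band_projection B P.

Lemma bproj_in x : B (P x). Proof. exact: (hP x).1. Qed.

Lemma bproj_uniq x u : B u -> (forall b, B b -> vdisj (x - u) b) -> P x = u.
Proof.
move=> Bu hu; have [BPx hPx] := hP x.
apply/eqP; rewrite -subr_eq0; apply/eqP/vdisjxx.
have e : P x - u = (x - u) + (-1) *: (x - P x).
  by rewrite scaleN1r opprB [RHS]addrC [RHS]addrA subrK.
rewrite {1}e; apply: vdisjD; first by apply: hu; apply: bandB.
apply: vdisjZ; first by rewrite oppr_eq0 oner_eq0.
by apply: hPx; apply: bandZ; apply: bandB.
Qed.

Lemma bproj_id u : B u -> P u = u.
Proof. by move=> Bu; apply: bproj_uniq => // b _; rewrite subrr; apply: vdisj0. Qed.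

Lemma bprojD x y : P (x + y) = P x + P y.
Proof.
apply: bproj_uniq => [|b Bb]; first by apply: bandD; apply: bproj_in.
rewrite opprD addrACA.
by apply: vdisjD; [apply: (hP x).2|apply: (hP y).2].
Qed.

Lemma bprojZ (c : R) x : P (c *: x) = c *: P x.
Proof.
have [->|c0] := eqVneq c 0; first by rewrite !scale0r bproj_id //; apply: band0.
apply: bproj_uniq => [|b Bb]; first by apply: bandZ; apply: bproj_in.
by rewrite -scalerBr; apply: vdisjZ => //; apply: (hP x).2; apply: bandZ.
Qed.

Lemma bprojN x : P (- x) = - P x.
Proof. by rewrite -scaleN1r bprojZ scaleN1r. Qed.

Lemma bprojB x y : P (x - y) = P x - P y.
Proof. by rewrite bprojD bprojN. Qed.

(* The negative part of [P x] lies in [B] and below [vabs (x - P x)], which is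
   disjoint from [B]. *)
Lemma bproj_ge0 x : le 0 x -> le 0 (P x).
Proof.
move=> x0; have [BPx hPx] := hP x.
have Bn : B (vneg (P x)) by apply: band_vjoin; [apply: bandN|apply: band0].
have n_le : le (vneg (P x)) (vabs (x - P x)).
  apply: vle_trans (vpos_vneg_le_vabs _).1; apply: vjoin_lel.
  by rewrite -vsubr_ge0 opprK subrK.
have n0 : vneg (P x) = 0.
  apply: vle_anti; last exact: vneg_ge0.
  have := hPx _ Bn; rewrite /Defs.vdisj (ger0_vabs (vneg_ge0 _)) => <-.
  exact: vmeet_glb (vle_refl _).
by rewrite -(vpos_sub_vneg (P x)) n0 subr0; apply: vpos_ge0.
Qed.

Lemma bproj_le x y : le x y -> le (P x) (P y).
Proof. by move=> /vsubr_ge0 /bproj_ge0; rewrite bprojB => /vsubr_ge0. Qed.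

Lemma vabs_bproj_le x : le (vabs (P x)) (P (vabs x)).
Proof.
apply: vabs_lub; first by apply: bproj_le; apply: vabs_ge.
by rewrite -bprojN; apply: bproj_le; apply: vabs_geN.
Qed.

End Projection.
End Band.

Hypothesis oc : order_complete le.

Section Gluing.
Variables (I : Type) (B : I -> set E) (P : I -> E -> E).
Hypothesis hB : forall a, is_band le (B a).
Hypothesis hdisj : forall a b, a <> b -> forall x y, B a x -> B b y -> vdisj x y.
Hypothesis hP : forall a, is_band_projection (B a) (P a).

(* [s] is the supremum of the [w b]; [s - w a] lies below the supremum of the [w b],
   [b <> a], which is disjoint from [B a]. *)
Lemma bproj_glue_ge0 (w : I -> E) U : (forall a, B a (w a)) ->
  (forall a, le 0 (w a)) -> (forall a, le (w a) U) -> exists s, forall a, P a s = w a.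
Proof.
move=> Bw w0 wU.
have sup_ex J : exists s, is_sup le ([set 0] `|` w @` J) s.
  apply: oc; first by exists 0; left.
  by exists (vjoin U 0) => _ [->|[b _ <-]];
    [apply: vjoin_ubr|apply: vle_trans (wU b) (vjoin_ubl _ _)].
have [s [s_ub s_lub]] := sup_ex setT.
exists s => a; have [s' [s'_ub s'_lub]] := sup_ex (~` [set a]).
have s'0 : le 0 s' by apply: s'_ub; left.
have swa0 : le 0 (s - w a) by apply/vsubr_ge0/s_ub; right; exists a.
have swa_le : le (s - w a) s'.
  rewrite -(vlerD2r (w a)) subrK addrC; apply: s_lub => _ [->|[b _ <-]].
    by rewrite -[0]addr0; apply: vlerD.
  have [->|ba] := pselect (b = a); first by apply: vler_addr.
  rewrite -[w b]add0r; apply: vlerD => //; apply: s'_ub; right; by exists b.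
apply: (bproj_uniq (hB a) (hP a)) => // g Bg.
apply: vle_anti; last by apply: vmeet_ge0; apply: vabs_ge0.
rewrite (ger0_vabs swa0) -(is_sup_vmeet_eq0 _ (conj s'_ub s'_lub) (vabs_ge0 g)).
- exact: vmeet_lel.
- by exists 0; left.
move=> _ [->|[b ba <-]]; first by split; [apply: vle_refl|apply/vmeet_idPl/vabs_ge0].
by split => //; rewrite -(ger0_vabs (w0 b)); exact: (hdisj ba (Bw b) Bg).
Qed.

Lemma bproj_glue (w : I -> E) U : (forall a, B a (w a)) ->
  (forall a, le (vabs (w a)) U) -> exists s, forall a, P a s = w a.
Proof.
move=> Bw wU.
have B_pos_neg a : B a (vpos (w a)) /\ B a (vneg (w a)).
  have [B0 BN] := (band0 (hB a), bandN (hB a) (Bw a)).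
  by split; apply: (band_vjoin (hB a)).
have [sp hsp] : exists s, forall a, P a s = vpos (w a).
  apply: (bproj_glue_ge0 (U := U)) => a; first exact: (B_pos_neg a).1.
    exact: vpos_ge0.
  exact: vle_trans (vpos_vneg_le_vabs _).1 (wU a).
have [sn hsn] : exists s, forall a, P a s = vneg (w a).
  apply: (bproj_glue_ge0 (U := U)) => a; first exact: (B_pos_neg a).2.
    exact: vneg_ge0.
  exact: vle_trans (vpos_vneg_le_vabs _).2 (wU a).
by exists (sp - sn) => a; rewrite (bprojB (hB a) (hP a)) hsp hsn vpos_sub_vneg.
Qed.

End Gluing.

Section Representation.
Variables (X : topologicalType) (B : set E) (T : E -> Sfun R X) (e : E).
Hypothesis hB : is_band le B.
Hypothesis hT : injective_lattice_hom le B T.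
Hypothesis Be : B e.
Hypothesis Te : Seq (T e) (Sone R X).
Hypothesis CX_closure :
  forall s, is_S s -> in_CX s -> in_sup_closure (T @` gen_ideal le B e) s.
Hypotheses (cX : compact [set: X]) (hX : hausdorff_space X).

Local Notation Tdom y := (sdom (T y)).
Local Notation Tval y := (sfn (T y)).

Lemma T_is_S y : B y -> is_S (T y). Proof. by case: hT => + _; apply. Qed.

Lemma TvalD y z q : B y -> B z -> Tdom (y + z) q -> Tdom y q -> Tdom z q ->
  Tval (y + z) q = Tval y q + Tval z q.
Proof. by case: hT => _ [TD _] By Bz yzq yq zq; apply: TD. Qed.

Lemma TvalZ c y q : B y -> Tdom (c *: y) q -> Tdom y q -> Tval (c *: y) q = c * Tval y q.
Proof. by case: hT => _ [_ [TZ _]] By cyq yq; apply: TZ. Qed.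

Lemma TvalN y q : B y -> Tdom (- y) q -> Tdom y q -> Tval (- y) q = - Tval y q.
Proof. by move=> By; rewrite -scaleN1r => Nyq yq; rewrite (TvalZ By Nyq yq) mulN1r. Qed.

Lemma Tval0 q : Tdom 0 q -> Tval 0 q = 0.
Proof.
by move=> q0; have := TvalZ (c := 0) (q := q) (band0 hB); rewrite scale0r mul0r; apply.
Qed.

Lemma Tval_vjoin y z q : B y -> B z -> Tdom (vjoin y z) q -> Tdom y q -> Tdom z q ->
  Tval (vjoin y z) q = Num.max (Tval y q) (Tval z q).
Proof. by case: hT => _ [_ [_ [TJ _]]] By Bz jq yq zq; apply: TJ. Qed.

Lemma T_inj y z : B y -> B z -> Seq (T y) (T z) -> y = z.
Proof. by case: hT => _ [_ [_ [_ Tinj]]]; apply: Tinj. Qed.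

Lemma Tval_le y z q : B y -> B z -> le y z -> Tdom y q -> Tdom z q ->
  Tval y q <= Tval z q.
Proof.
move=> By Bz yz yq zq.
by have := Tval_vjoin By Bz; rewrite (vjoin_idPr yz) => ->//; rewrite le_max lexx.
Qed.

Definition common_dom (l : seq E) : set X := foldr (fun y D => Tdom y `&` D) setT l.

Lemma common_dom_open_dense l : foldr (fun y P => B y /\ P) True l ->
  open (common_dom l) /\ dense (common_dom l).
Proof.
elim: l => [_|y l IH [By /IH [ol dl]]] /=.
  by split; [exact: openT|move=> O [x Ox] _; exists x].
have [oy [dy _]] := T_is_S By.
by split; [apply: openI|apply: denseI].
Qed.

Lemma Tval_vmeet y z q : B y -> B z ->
  common_dom [:: vmeet y z; y; z; - y; - z; vjoin (- y) (- z)] q ->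
  Tval (vmeet y z) q = Num.min (Tval y q) (Tval z q).
Proof.
move=> By Bz [mq [yq [zq [Nyq [Nzq [jq _]]]]]].
have [BNy BNz] := (bandN hB By, bandN hB Bz).
rewrite (TvalN (band_vjoin hB BNy BNz)) // Tval_vjoin // !TvalN //.
by rewrite -oppr_min opprK.
Qed.

Lemma vle_Tval y z (D : set X) : B y -> B z -> dense D ->
  (forall q, Tdom y q -> Tdom z q -> D q -> Tval y q <= Tval z q) -> le y z.
Proof.
move=> By Bz dD yz; have Bj := band_vjoin hB By Bz.
suff -> : z = vjoin y z by apply: vjoin_ubl.
apply: T_inj => // q zq jq.
have [[oz _] [oj _]] := (T_is_S Bz, T_is_S Bj).
have [oD dyD] : open (Tdom z `&` Tdom (vjoin y z)) /\ dense (Tdom y `&` D).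
  by have [oy [dy _]] := T_is_S By; split; [apply: openI|apply: denseI].
apply: (continuous_eq_dense oD dyD _ _ _ (conj zq jq)).
- by move=> r [rz _]; apply: is_S_continuous (T_is_S Bz) rz.
- by move=> r [_ rj]; apply: is_S_continuous (T_is_S Bj) rj.
- by move=> r [rz rj] [ry rD]; rewrite Tval_vjoin // max_r //; apply: yz.
Qed.

Lemma band_urysohn q (V : set X) : open V -> V q -> exists w, B w /\
  exists phi : X -> R, [/\ continuous phi, forall r, 0 <= phi r <= 1,
    (forall r, ~ V r -> phi r = 0), phi q = 1 &
    forall r, Tdom w r -> `|phi r - Tval w r| <= 8^-1].
Proof.
move=> oV Vq; have [phi [phic phi01 phiV phiq]] := urysohn_point R cX hX oV Vq.
have Sphi : is_S (MkSfun setT phi).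
  split; first exact: openT.
  by split; [move=> O [x Ox] _; exists x|exact: continuous_subspaceT].
have CXphi : in_CX (MkSfun setT phi) by exists phi.
have eighth_gt0 : (0 : R) < 8^-1 by rewrite invr_gt0.
have [_ [[w [Bw _] <-] approx]] := CX_closure Sphi CXphi eighth_gt0.
by exists w; split => //; exists phi; split => // r; apply: approx.
Qed.

(* A positive element of [B], nonzero near [q], whose image lies under the gap
   [sfn s - sfn t] wherever it does not vanish (checked on the dense set [D]). *)
Definition bump_under (s t : Sfun R X) q b : Prop :=
  [/\ B b, le 0 b & exists D N : set X, [/\ dense D, open N, N q &
    forall r, Tdom b r -> D r -> (N r -> 0 < Tval b r) /\
      (Tval b r = 0 \/ [/\ sdom s r, sdom t r & Tval b r < sfn s r - sfn t r])]].

(* [b] is [eps] times the positive part of [w - e/8]: since [T e = 1], subtracting [e/8]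
   absorbs the approximation error, so [b] vanishes off [V] and is positive where
   [phi > 1/2]. *)
Lemma exists_bump_under s t q : is_S s -> is_S t -> sdom s q -> sdom t q ->
  sfn t q < sfn s q -> exists b, bump_under s t q b.
Proof.
move=> Ss St sq tq ts.
have [eps [V [eps0 oV Vq gapV]]] := is_S_gap_nbhs Ss St sq tq ts.
have [w [Bw [phi [phic phi01 phiV phiq approx]]]] := band_urysohn oV Vq.
pose c := w + (- 8^-1) *: e.
have Be' : B ((- 8^-1) *: e) := bandZ hB _ Be.
have Bc : B c := bandD hB Bw Be'.
have [Bp B0] := (band_vjoin hB Bc (band0 hB), band0 hB).
have Bb : B (eps *: vpos c) := bandZ hB _ Bp.
exists (eps *: vpos c); split => //.
  by rewrite -(scaler0 _ eps); apply: vlerZ; [apply: ltW|apply: vpos_ge0].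
pose l := [:: w; e; (- 8^-1) *: e; c; vpos c; 0].
have [_ dD] : open (common_dom l) /\ dense (common_dom l).
  by apply: common_dom_open_dense; do !split.
exists (common_dom l), (phi @^-1` `]2^-1, +oo[).
split => //.
- by apply: open_comp; [move=> x _; apply: phic|apply: interval_open].
- by rewrite /= phiq in_itv /= andbT; lra.
move=> r br [wr [er [e'r [cr [pr [zr _]]]]]].
have Tw := approx r wr; rewrite ler_norml in Tw; have := phi01 r.
rewrite TvalZ // /vpos Tval_vjoin // Tval0 // TvalD // TvalZ // (Te er) //= mulr1.
split.
  by rewrite /= in_itv /= andbT => ?; apply: mulr_gt0 => //; rewrite lt_max; lra.
have [Vr|nVr] := pselect (V r).
  have [rs rt gap] := gapV r Vr; right; split => //.
  apply: le_lt_trans gap; rewrite -[X in _ <= X]mulr1 ler_wpM2l ?ge_max; lra.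
by left; rewrite max_r ?mulr0 //; move: Tw; rewrite phiV //; lra.
Qed.

Lemma bump_under_neq0 s t q b : bump_under s t q b -> b <> 0.
Proof.
move=> [_ _ [D [N [dD oN Nq bD]]]] b0; rewrite {}b0 in bD.
have [open0 [dense0 _]] := T_is_S (band0 hB).
have [r [Nr [r0 Dr]]] := denseI open0 dense0 dD (ex_intro _ q Nq) oN.
have [b_pos _] := bD r r0 Dr.
by move: (b_pos Nr); rewrite Tval0 // ltxx.
Qed.

Section Interpolation.
Variables (u : E) (s : Sfun R X).
Hypotheses (Bu : B u) (u0 : le 0 u) (Ss : is_S s).
Hypotheses (s_le_Tu : Sle s (T u)) (TNu_le_s : Sle (T (- u)) s).

Definition minorants : set E := [set w | [/\ B w, le (- u) w, le w u & Sle (T w) s]].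

Lemma minorants_Nu : minorants (- u).
Proof. by split; [apply: bandN|apply: vle_refl|apply: vge0_leN|]. Qed.

Section Supremum.
Variable z : E.
Hypothesis z_sup : is_sup le minorants z.

Lemma sup_minorants_band : B z.
Proof. by apply: (band_sup hB _ z_sup) => w []. Qed.

Lemma sup_minorants_geNu : le (- u) z.
Proof. exact: z_sup.1 _ minorants_Nu. Qed.

Lemma sup_minorants_leu : le z u.
Proof. by apply: z_sup.2 => w []. Qed.

(* Otherwise a bump under [T z - s] could be removed from [z], leaving an upper bound. *)
Lemma T_sup_minorants_le : Sle (T z) s.
Proof.
have Bz := sup_minorants_band.
move=> q zq sq; rewrite leNgt; apply/negP => sz.
have [b bu] := exists_bump_under (T_is_S Bz) Ss zq sq sz.
apply: (bump_under_neq0 bu); case: bu => Bb b0 [D [N [dD _ _ bD]]].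
have [BNb Bzb] := (bandN hB Bb, bandB hB Bz Bb).
have [oC dC] : open (common_dom [:: z; b; - b; z - b]) /\
    dense (common_dom [:: z; b; - b; z - b]).
  by apply: common_dom_open_dense; do !split.
have z_le : le z (z - b).
  apply: z_sup.2 => w w_min; have [Bw _ _ ws] := w_min.
  apply: (vle_Tval Bw Bzb (denseI oC dC dD)).
  move=> r wr _ [[zr [br [Nbr [zbr _]]]] Dr].
  rewrite TvalD // TvalN //; have [_ [b_eq0|[_ rs gap]]] := bD r br Dr.
    by rewrite b_eq0 subr0; apply: Tval_le Bw Bz (z_sup.1 _ w_min) wr zr.
  by have := ws r wr rs; lra.
apply: vle_anti b0; rewrite -vlerN2 oppr0 -(vlerD2l z) addr0.
exact: z_le.
Qed.

Lemma vmeet_bump_minorant q b : bump_under s (T z) q b -> minorants (vmeet (z + b) u).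
Proof.
have [Bz Nuz] := (sup_minorants_band, sup_minorants_geNu).
move=> [Bb b0 [D [N [dD _ _ bD]]]].
have Bzb := bandD hB Bz Bb; have Bg := band_vmeet hB Bzb Bu.
split => //; last 2 first.
- exact: vmeet_lbr.
- have [oC dC] : open (common_dom [:: vmeet (z + b) u; z; b; z + b]) /\
      dense (common_dom [:: vmeet (z + b) u; z; b; z + b]).
    by apply: common_dom_open_dense; do !split.
  apply: (is_S_le_dense (T_is_S Bg) Ss (denseI oC dC dD)).
  move=> r gr sr [[_ [zr [br [zbr _]]]] Dr].
  have := Tval_le Bg Bzb (vmeet_lbl (z + b) u) gr zbr; rewrite TvalD //.
  have := T_sup_minorants_le zr sr.
  by have [_ [->|[_ _ gap]]] := bD r br Dr; lra.
apply: vmeet_glb; last exact: vge0_leN.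
exact: vle_trans Nuz (vler_addr _ b0).
Qed.

(* Otherwise adding a bump under [s - T z] to [z] and cutting at [u] gives a minorant
   that exceeds [z] near the bump. *)
Lemma T_sup_minorants_ge : Sle s (T z).
Proof.
have Bz := sup_minorants_band.
move=> q sq zq; rewrite leNgt; apply/negP => zs.
have [b bu] := exists_bump_under Ss (T_is_S Bz) sq zq zs.
have g_le_z := z_sup.1 _ (vmeet_bump_minorant bu).
case: bu => Bb _ [D [N [dD oN Nq bD]]].
have [Bzb BNu] := (bandD hB Bz Bb, bandN hB Bu).
have [Bg BNzb] := (band_vmeet hB Bzb Bu, bandN hB Bzb).
have Bj := band_vjoin hB BNzb BNu.
pose l := [:: vmeet (z + b) u; z + b; u; - (z + b); - u; vjoin (- (z + b)) (- u); z; b].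
have [oC dC] : open (common_dom l) /\ dense (common_dom l).
  by apply: common_dom_open_dense; do !split.
have [r [Nr [Cr Dr]]] := denseI oC dC dD (ex_intro _ q Nq) oN.
have [gr [zbr [ur [Nzbr [Nur [jr [zr [br _]]]]]]]] := Cr.
have Tg : Tval (vmeet (z + b) u) r = Num.min (Tval (z + b) r) (Tval u r).
  by apply: Tval_vmeet => //; do !split.
have := Tval_le Bg Bz g_le_z gr zr; rewrite Tg.
have [/(_ Nr) b_gt0 [b_eq0|[rs _ gap]]] := bD r br Dr.
  by move: b_gt0; rewrite b_eq0 ltxx.
have := s_le_Tu rs ur; rewrite TvalD // ge_min; lra.
Qed.

End Supremum.

Lemma band_interpolate : exists z, [/\ B z, le (- u) z, le z u & Seq s (T z)].
Proof.
have [z z_sup] : exists z, is_sup le minorants z.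
  by apply: oc; [exists (- u); apply: minorants_Nu|exists u => w []].
exists z; split.
- exact: sup_minorants_band.
- exact: sup_minorants_geNu.
- exact: sup_minorants_leu.
move=> q sq zq; apply/eqP; rewrite eq_le.
by rewrite (T_sup_minorants_le z_sup) // (T_sup_minorants_ge z_sup).
Qed.

End Interpolation.

Lemma band_ideal_image y u s : B y -> B u -> le (vabs y) u -> is_S s ->
  Sle (Sabs s) (Sabs (T y)) -> exists z, [/\ B z, le (vabs z) u & Seq s (T z)].
Proof.
move=> By Bu yu Ss sy.
have [BNy BNu] := (bandN hB By, bandN hB Bu).
have Bay := band_vjoin hB By BNy.
pose l := [:: y; - y; vabs y; u; - u].
have [oC dC] : open (common_dom l) /\ dense (common_dom l).
  by apply: common_dom_open_dense; do !split.
have abs_Tval r : common_dom l r -> `|Tval y r| <= Tval u r.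
  move=> [yr [Nyr [ayr [ur _]]]].
  have := Tval_le Bay Bu yu ayr ur.
  by rewrite Tval_vjoin // TvalN // maxrN.
have u0 : le 0 u by apply: vle_trans yu; apply: vabs_ge0.
have [||z [Bz Nuz zu sz]] := band_interpolate Bu u0 Ss.
- apply: (is_S_le_dense Ss (T_is_S Bu) dC) => r sr ur Cr.
  have /= := sy r sr Cr.1; have := abs_Tval r Cr; have := ler_norm (sfn s r); lra.
- apply: (is_S_le_dense (T_is_S BNu) Ss dC) => r Nur sr Cr.
  have [_ [_ [_ [ur _]]]] := Cr; rewrite TvalN //.
  have /= := sy r sr Cr.1; have := abs_Tval r Cr.
  by have := ler_norm (- sfn s r); rewrite normrN; lra.
by exists z; split => //; apply: vabs_lub; rewrite // -vlerN2 opprK.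
Qed.

End Representation.

End VectorLatticeTheory.

Theorem corollary3p5 (R : realType) (E : lmodType R) (le : E -> E -> Prop)
  (I : Type) (B : I -> set E) (xu : I -> E) (P : I -> E -> E)
  (X : I -> topologicalType) (T : forall a : I, E -> Sfun R (X a)) :
  vector_lattice le ->
  order_complete le ->
  (* pairwise disjoint bands, each with a weak unit *)
  (forall a, is_band le (B a)) ->
  (forall a b, a <> b -> forall x y, B a x -> B b y -> vdisj le x y) ->
  (forall a, weak_unit le (B a) (xu a)) ->
  (* P a is the band projection onto B a *)
  (forall a x, B a (P a x) /\ forall b, B a b -> vdisj le (x - P a x) b) ->
  (* every x >= 0 is the supremum of its components y_a = P a x in B a *)
  (forall x, le 0 x -> is_sup le (range (fun a => P a x)) x) ->
  (* the spaces X_a and the maps T_a *)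
  (forall a, compact [set: X a] /\ hausdorff_space (X a)) ->
  (forall a, injective_lattice_hom le (B a) (T a)) ->
  (forall a, Seq (T a (xu a)) (Sone R (X a))) ->
  (forall a (s : Sfun R (X a)), is_S s ->
     (in_sup_closure (T a @` gen_ideal le (B a) (xu a)) s <-> in_CX s)) ->
  (* conclusion: T(E), T x := (T_a (P a x))_a, is an ideal of
     S(X) = prod_a S(X_a) *)
  let TE := fun (x : E) (a : I) => T a (P a x) in
  (forall x y, exists z, forall a, Seq (TE z a) (Sadd (TE x a) (TE y a))) /\
  (forall (c : R) x, exists z, forall a, Seq (TE z a) (Sscale c (TE x a))) /\
  (forall (s : forall a, Sfun R (X a)) (x : E),
     (forall a, is_S (s a)) ->
     (forall a, Sle (Sabs (s a)) (Sabs (TE x a))) ->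
     exists y, forall a, Seq (s a) (TE y a)).
Proof.
move=> VL oc hB hdisj hwu hP0 hsup hX hT hone hcl TE.
have hP a : is_band_projection le (B a) (P a) := hP0 a.
have TD a := (hT a).2.1; have TZ a := (hT a).2.2.1.
split; [|split].
- move=> x y; exists (x + y) => a; rewrite /TE (bprojD VL (hB a) (hP a)).
  by apply: TD; exact: (bproj_in (hP a)).
- move=> c x; exists (c *: x) => a; rewrite /TE (bprojZ VL (hB a) (hP a)).
  by apply: TZ; exact: (bproj_in (hP a)).
move=> s x Ss s_le.
have x_comp a : exists z, [/\ B a z, le (vabs le z) (vabs le x) & Seq (s a) (T a z)].
  have [z [Bz z_le sz]] := band_ideal_image VL oc (hB a) (hT a) (hwu a).1 (hone a)
    (fun t St => (hcl a t St).2) (hX a).1 (hX a).2 (bproj_in (hP a) x)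
    (bproj_in (hP a) (vabs le x)) (vabs_bproj_le VL (hB a) (hP a) x) (Ss a) (s_le a).
  exists z; split => //; apply: (vle_trans VL z_le).
  by apply: (hsup _ (vabs_ge0 VL x)).1; exists a.
have [z hz] := choice x_comp.
have Bz a : B a (z a) by case: (hz a).
have z_le a : le (vabs le (z a)) (vabs le x) by case: (hz a).
have [y hy] := bproj_glue VL oc hB hdisj hP Bz z_le.
by exists y => a; rewrite /TE hy; case: (hz a).
Qed.
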